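(* Let $h$ be a line tree whose nodes each test a dimension distinct from their ancestors, with set of tested dimensions $d_h$, and let $x$ satisfy $h(x)=l_h$. Then for any $x'$ such that, for all $a\in d_h$, $x'_a\le x_a$ if $f_h(a)=\mathrm{prefix}$ and $x_a\le x'_a$ if $f_h(a)=\mathrm{suffix}$, we have $h(x')=l_h$.
   Context: A line tree is a decision tree (each internal node compares one coordinate with a threshold, each leaf carries a label in $\{0,1\}$) in which every internal node has at least one leaf child, and all leaves except the deepest carry the same label while the deepest leaf carries the opposite label; $l_h$ denotes the label of the deepest leaf. $d_h$ is the set of dimensions tested by nodes of $h$. For $a\in d_h$, $f_h(a)=\mathrm{prefix}$ if at the node testing $a$ the samples with $x_a$ below the threshold are directed toward the leaf labeled $l_h$, and $f_h(a)=\mathrm{suffix}$ if the samples with $x_a$ above the threshold are directed toward that leaf. *)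

From mathcomp Require Import all_boot all_order all_algebra.
Set Implicit Arguments. Unset Strict Implicit. Unset Printing Implicit Defensive.
Import Order.TTheory GRing.Theory Num.Theory.
Local Open Scope ring_scope.

Inductive dtree (n : nat) (R : Type) : Type :=
| Leaf of bool
| Node of 'I_n & R & dtree n R & dtree n R.
Arguments Leaf {n R}.
Arguments Node {n R}.

Fixpoint eval_tree (n : nat) (R : realDomainType) (h : dtree n R)
    (x : 'I_n -> R) : bool :=
  match h with
  | Leaf b => b
  | Node a t L Rt => if x a <= t then eval_tree L x else eval_tree Rt x
  end.

Fixpoint dims (n : nat) (R : Type) (h : dtree n R) : seq 'I_n :=
  match h with
  | Leaf _ => [::]
  | Node a _ L Rt => a :: dims L ++ dims Rt
  end.

Fixpoint distinct_dims (n : nat) (R : Type) (h : dtree n R) : bool :=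
  match h with
  | Leaf _ => true
  | Node a _ L Rt =>
      [&& a \notin dims L, a \notin dims Rt, distinct_dims L & distinct_dims Rt]
  end.

Definition is_leaf_lbl (n : nat) (R : Type) (h : dtree n R) (b : bool) : bool :=
  if h is Leaf c then c == b else false.

(* line_tree h l : h is a line tree whose deepest leaf carries label l (= l_h). *)
Inductive line_tree (n : nat) (R : Type) : dtree n R -> bool -> Prop :=
| LT_leaf (l : bool) : line_tree (Leaf l) l
| LT_base_l (a : 'I_n) (t : R) (l : bool) :
    line_tree (Node a t (Leaf l) (Leaf (~~ l))) l
| LT_base_r (a : 'I_n) (t : R) (l : bool) :
    line_tree (Node a t (Leaf (~~ l)) (Leaf l)) l
| LT_step_l (a : 'I_n) (t : R) (h : dtree n R) (l : bool) :
    line_tree h l -> ~~ is_leaf_lbl h l -> line_tree (Node a t h (Leaf (~~ l))) l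
| LT_step_r (a : 'I_n) (t : R) (h : dtree n R) (l : bool) :
    line_tree h l -> ~~ is_leaf_lbl h l -> line_tree (Node a t (Leaf (~~ l)) h) l.

(* f_h(a): at the (first) node testing a, [Some true] = prefix (samples below
   the threshold, i.e. going left, are directed toward the leaf labelled l),
   [Some false] = suffix (samples above the threshold, going right, are).
   The child toward the deepest leaf is the child that is not the side leaf
   labelled ~~ l.  [None] if a is not tested. *)
Fixpoint fdir (n : nat) (R : Type) (h : dtree n R) (l : bool) (c : 'I_n)
    : option bool :=
  match h with
  | Leaf _ => None
  | Node a _ L Rt =>
      if a == c then Some (~~ is_leaf_lbl L (~~ l))
      else if is_leaf_lbl L (~~ l) then fdir Rt l c else fdir L l c
  end.

Definition dir_prefix := true.
Definition dir_suffix := false.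

From mathcomp Require Import all_boot all_order all_algebra.
Import Order.TTheory GRing.Theory Num.Theory.
Local Open Scope ring_scope.

Set Implicit Arguments.
Unset Strict Implicit.
Unset Printing Implicit Defensive.

(* Along a line tree every node has a side leaf labelled ~~ l_h, so a sample
   classified l_h must leave each node through the child toward the deepest
   leaf, i.e. x_a <= t at a prefix node and x_a > t at a suffix node.  Moving
   x_a in the direction f_h(a) keeps these inequalities, and since no
   dimension is tested twice on the path, the moves at different nodes do not
   interfere; x' therefore follows the same path to the deepest leaf. *)

Section LineTreeShape.

Variables (n : nat) (R : Type).
Implicit Types (h L : dtree n R) (l : bool).

Lemma line_tree_not_leaf_neg h l : line_tree h l -> is_leaf_lbl h (~~ l) = false.
Proof. by case=> //= c; case: c. Qed.

(* The side conditions of [line_tree] are irrelevant for induction: the base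
   nodes are spine nodes over the leaf [Leaf l]. *)
Lemma line_tree_spine_ind (P : dtree n R -> bool -> Prop) :
  (forall l, P (Leaf l) l) ->
  (forall a t L l, line_tree L l -> P L l -> P (Node a t L (Leaf (~~ l))) l) ->
  (forall a t L l, line_tree L l -> P L l -> P (Node a t (Leaf (~~ l)) L) l) ->
  forall h l, line_tree h l -> P h l.
Proof.
move=> Pleaf Pl Pr h0 l0; elim=> [l|a t l|a t l|a t h l hl Ph _|a t h l hl Ph _].
- exact: Pleaf.
- by apply: Pl; [exact: LT_leaf | exact: Pleaf].
- by apply: Pr; [exact: LT_leaf | exact: Pleaf].
- exact: Pl.
- exact: Pr.
Qed.

Lemma fdir_spine_l a t L l c : line_tree L l ->
  fdir (Node a t L (Leaf (~~ l))) l c =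
  if a == c then Some dir_prefix else fdir L l c.
Proof. by move=> /line_tree_not_leaf_neg /= ->. Qed.

Lemma fdir_spine_r a t L l c :
  fdir (Node a t (Leaf (~~ l)) L) l c =
  if a == c then Some dir_suffix else fdir L l c.
Proof. by rewrite /= eqxx. Qed.

End LineTreeShape.

Section LineTreeEval.

Variables (n : nat) (R : realDomainType).
Implicit Types (h L : dtree n R) (l : bool) (x : 'I_n -> R).

Definition toward_deepest_leaf h l x (x' : 'I_n -> R) :=
  forall a : 'I_n, a \in dims h ->
    (fdir h l a = Some dir_prefix -> x' a <= x a) /\
    (fdir h l a = Some dir_suffix -> x a <= x' a).

Lemma toward_deepest_leaf_spine_l a t L l x x' :
  line_tree L l -> a \notin dims L ->
  toward_deepest_leaf (Node a t L (Leaf (~~ l))) l x x' ->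
  x' a <= x a /\ toward_deepest_leaf L l x x'.
Proof.
move=> hL aL tow; split.
  by have [+ _] := tow a (mem_head _ _); rewrite fdir_spine_l // eqxx => /(_ erefl).
move=> b bL; have ab : (a == b) = false by apply: contraNF aL => /eqP ->.
by have := tow b; rewrite fdir_spine_l // ab inE cats0 bL orbT => /(_ isT).
Qed.

Lemma toward_deepest_leaf_spine_r a t L l x x' :
  a \notin dims L ->
  toward_deepest_leaf (Node a t (Leaf (~~ l)) L) l x x' ->
  x a <= x' a /\ toward_deepest_leaf L l x x'.
Proof.
move=> aL tow; split.
  by have [_] := tow a (mem_head _ _); rewrite fdir_spine_r eqxx => /(_ erefl).
move=> b bL; have ab : (a == b) = false by apply: contraNF aL => /eqP ->.
by have := tow b; rewrite fdir_spine_r ab inE bL orbT => /(_ isT).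
Qed.

Lemma eval_spine_l_le a t L l x :
  eval_tree (Node a t L (Leaf (~~ l))) x = l -> x a <= t.
Proof. by rewrite /=; case: ifP => //; case: l. Qed.

Lemma eval_spine_r_gt a t L l x :
  eval_tree (Node a t (Leaf (~~ l)) L) x = l -> t < x a.
Proof. by rewrite /= ltNge; case: ifP => //; case: l. Qed.

End LineTreeEval.

Theorem lemma22 (n : nat) (R : realDomainType) (h : dtree n R) (lh : bool)
    (x x' : 'I_n -> R) :
  line_tree h lh ->
  distinct_dims h ->
  eval_tree h x = lh ->
  (forall a : 'I_n, a \in dims h ->
     (fdir h lh a = Some dir_prefix -> x' a <= x a) /\
     (fdir h lh a = Some dir_suffix -> x a <= x' a)) ->
  eval_tree h x' = lh.
Proof.
move: h lh; apply: line_tree_spine_ind => [//|a t L l hL IH|a t L l hL IH].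
- move=> + hx tow; rewrite /= andbT => /andP[aL dL].
  have [x'a towL] := toward_deepest_leaf_spine_l hL aL tow.
  have xa := eval_spine_l_le hx.
  rewrite (le_trans x'a xa); apply: IH => //.
  by move: hx => /=; rewrite xa.
- move=> + hx tow; rewrite /= => /andP[aL dL].
  have [xx'a towL] := toward_deepest_leaf_spine_r aL tow.
  have xa := eval_spine_r_gt hx.
  rewrite leNgt (lt_le_trans xa xx'a); apply: IH => //.
  by move: hx => /=; rewrite leNgt xa.
Qed.
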